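(* Let $W$ be a real $N\times N$ matrix with singular value decomposition $W=U\Sigma V^\top$ and singular values $\sigma_1\ge\cdots\ge\sigma_N\ge0$, let $1\le n<N$, and let $V_n$ be the $N\times n$ matrix of the first $n$ right singular vectors of $W$ (first $n$ columns of $V$). Let $g:\mathbb{R}^N\times\mathbb{R}^N\to\mathbb{R}^N$ be continuously differentiable, with Jacobian matrices $J_x(x,y)=\big(\partial g_i/\partial x_j\big)_{i,j}$ and $J_y(x,y)=\big(\partial g_i/\partial y_j\big)_{i,j}$. Consider the complete dynamics $\dot x=g(x,Wx)$ and the reduced dynamics $\dot X=Mg(M^+X,WM^+X)$ with $M=V_n^\top$, and define the alignment error at $x\in\mathbb{R}^N$ by \[\mathcal{E}(x)=\frac{1}{\sqrt n}\big\|Mg(x,Wx)-Mg(M^+Mx,WM^+Mx)\big\|.\] Then for every $x\in\mathbb{R}^N$ there is a point $x'$ on the segment between $x$ and $V_nV_n^\top x$ such that, with $y'=Wx'$, \[\mathcal{E}(x)\le\frac{1}{\sqrt n}\Big[\big\|V_n^\top J_x(x',y')(I-V_nV_n^\top)x\big\|+\sigma_{n+1}\big\|V_n^\top J_y(x',y')\big\|_2\,\|x\|\Big].\] Moreover, for any $x\neq0$, \[\frac{\mathcal{E}(x)}{\|x\|}\le\frac{1}{\sqrt n}\Big[\alpha(x',y')+\sigma_{n+1}\beta(x',y')\Big],\] where $\alpha(x',y')=\sigma_1(J_x(x',y'))$ and $\beta(x',y')=\sigma_1(J_y(x',y'))$ are the largest singular values of the Jacobians.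
   Context: $\|\cdot\|$ is the Euclidean vector norm, $\|\cdot\|_2$ the spectral matrix norm, $M^+$ the Moore–Penrose pseudoinverse of $M$. *)

From HB Require Import structures.
From mathcomp Require Import all_boot all_order all_algebra.
From mathcomp Require Import all_classical all_reals all_analysis.
Set Implicit Arguments. Unset Strict Implicit. Unset Printing Implicit Defensive.
Import Order.TTheory GRing.Theory Num.Theory.
Import numFieldNormedType.Exports.
Local Open Scope classical_set_scope.
Local Open Scope ring_scope.

Section Defs.
Variable R : realType.

Definition enorm (k : nat) (v : 'cV[R]_k) : R := Num.sqrt (\sum_i (v i 0) ^+ 2).

Definition specnorm (m k : nat) (A : 'M[R]_(m, k)) : R :=
  sup [set enorm (A *m v) | v in [set v : 'cV[R]_k | enorm v <= 1]].

Definition sigma1 (m k : nat) (A : 'M[R]_(m, k)) : R :=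
  Num.sqrt (sup [set l : R | eigenvalue (A^T *m A) l]).

Definition penrose (m k : nat) (M : 'M[R]_(m, k)) (P : 'M[R]_(k, m)) : Prop :=
  [/\ M *m P *m M = M, P *m M *m P = P,
      (M *m P)^T = M *m P & (P *m M)^T = P *m M].

Definition pinv (m k : nat) (M : 'M[R]_(m, k)) : 'M[R]_(k, m) :=
  get [set P | penrose M P].

Definition firstcols (n N : nat) (h : (n <= N)%N) (V : 'M[R]_N) : 'M[R]_(N, n) :=
  \matrix_(i, j) V i (widen_ord h j).

Definition Jx (N : nat) (g : 'cV[R]_N -> 'cV[R]_N -> 'cV[R]_N) (x y : 'cV[R]_N)
  : 'M[R]_N := \matrix_(i, j) ('D_(delta_mx j 0) (fun z => g z y) x) i 0.
Definition Jy (N : nat) (g : 'cV[R]_N -> 'cV[R]_N -> 'cV[R]_N) (x y : 'cV[R]_N)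
  : 'M[R]_N := \matrix_(i, j) ('D_(delta_mx j 0) (fun z => g x z) y) i 0.

Definition C1 (N : nat) (g : 'cV[R]_N -> 'cV[R]_N -> 'cV[R]_N) : Prop :=
  (forall p : 'cV[R]_N * 'cV[R]_N,
      differentiable (fun q : 'cV[R]_N * 'cV[R]_N => g q.1 q.2) p)
  /\ continuous (fun p : 'cV[R]_N * 'cV[R]_N => Jx g p.1 p.2)
  /\ continuous (fun p : 'cV[R]_N * 'cV[R]_N => Jy g p.1 p.2).

(** SVD W = U diag(s) V^T with U, V orthogonal, s_1 >= ... >= s_N >= 0
    (s indexed from 0). *)
Definition is_svd (N : nat) (W U V : 'M[R]_N) (s : 'I_N -> R) : Prop :=
  [/\ U^T *m U = 1%:M, V^T *m V = 1%:M,
      W = U *m diag_mx (\row_i s i) *m V^T,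
      forall i, 0 <= s i &
      forall i j : 'I_N, (i <= j)%N -> s j <= s i].

Definition align_err (n N : nat) (g : 'cV[R]_N -> 'cV[R]_N -> 'cV[R]_N)
  (W : 'M[R]_N) (M : 'M[R]_(n, N)) (x : 'cV[R]_N) : R :=
  let z := pinv M *m M *m x in
  (Num.sqrt n%:R)^-1 * enorm (M *m g x (W *m x) - M *m g z (W *m z)).

End Defs.

(* Write z = V_n V_n^T x and d = x - z.  The scalar mean value theorem applied to
   t |-> <u, M g(z + t d, W (z + t d))>, where u is the difference to be estimated,
   gives a point x' on the segment with |u| <= |M (J_x d + J_y W d)|.  Since
   V^T d = copid_n V^T x, the SVD gives |W d| <= sigma_{n+1} |x|, and everything else
   is an operator-norm estimate.  The operator norm equals the largest singular value
   because |A|_2^2 is an eigenvalue of A^T A: otherwise |A|_2^2 I - A^T A would be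
   positive definite and |A|_2 could be lowered. *)

From Pilot Require Import Defs.
From HB Require Import structures.
From mathcomp Require Import all_boot all_order all_algebra.
From mathcomp Require Import all_classical all_reals all_analysis.
From mathcomp Require Import ring lra.
Import Order.TTheory GRing.Theory Num.Theory.
Import numFieldNormedType.Exports.
Local Open Scope ring_scope.

Set Implicit Arguments. Unset Strict Implicit. Unset Printing Implicit Defensive.

Section EuclideanNorm.
Variable R : realType.

Lemma le_of_sqr_le (a b : R) : 0 <= b -> a ^+ 2 <= b ^+ 2 -> a <= b.
Proof.
move=> b0 h; apply: le_trans (ler_norm a) _.
by rewrite -sqrtr_sqr -[b](ger0_norm b0) -sqrtr_sqr ler_wsqrtr.
Qed.

Lemma quad_ge0_discr (a b c : R) : 0 <= a -> 0 <= c ->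
  (forall t, 0 <= a + 2 * t * b + t ^+ 2 * c) -> b ^+ 2 <= a * c.
Proof.
move=> a0 c0 h; have [cp|] := ltrP 0 c.
  have := h (- b / c); rewrite (_ : _ + _ = a - b ^+ 2 / c); last first.
    by field; rewrite gt_eqF.
  by rewrite subr_ge0 ler_pdivrMr.
move=> cle; have c00 : c = 0 by apply/le_anti; rewrite cle c0.
rewrite c00 mulr0; have [-> | bn] := eqVneq b 0; first by rewrite expr0n.
have := h (- (a + 1) / (2 * b)); rewrite c00 mulr0 addr0.
by rewrite (_ : _ + _ = -1) ?ler0N1 //; field.
Qed.

Lemma mx11_trmx (A : 'M[R]_1) : A^T 0 0 = A 0 0.
Proof. by rewrite mxE. Qed.

Lemma psd_form_cauchy_schwarz k (C : 'M[R]_k) (w v : 'cV[R]_k) : C^T = C ->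
  (forall u : 'cV[R]_k, 0 <= (u^T *m C *m u) 0 0) ->
  ((w^T *m C *m v) 0 0) ^+ 2 <= (w^T *m C *m w) 0 0 * (v^T *m C *m v) 0 0.
Proof.
move=> symC psdC; apply: quad_ge0_discr => // t.
have symE : (v^T *m C *m w) 0 0 = (w^T *m C *m v) 0 0.
  by rewrite -mx11_trmx !trmx_mul trmxK symC mulmxA.
have := psdC (w + t *: v).
have trZ : (t *: v)^T = t *: v^T by apply/matrixP => i j; rewrite !mxE.
rewrite (raddfD (@trmx R k 1)) /= trZ !mulmxDl !mulmxDr -!scalemxAl -!scalemxAr scalerA.
move: symE; set a := w^T *m C *m w; set b := w^T *m C *m v.
set b' := v^T *m C *m w; set c := v^T *m C *m v.
rewrite !mxE => -> /le_trans; apply.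
by rewrite le_eqVlt; apply/orP; left; apply/eqP; ring.
Qed.

Lemma enorm_ge0 k (v : 'cV[R]_k) : 0 <= enorm v.
Proof. exact: sqrtr_ge0. Qed.

Lemma enorm_sqr k (v : 'cV[R]_k) : enorm v ^+ 2 = \sum_i v i 0 ^+ 2.
Proof. by rewrite sqr_sqrtr // sumr_ge0 // => i _; rewrite sqr_ge0. Qed.

Lemma enorm_sqrE k (v : 'cV[R]_k) : enorm v ^+ 2 = (v^T *m v) 0 0.
Proof. by rewrite enorm_sqr !mxE; apply: eq_bigr => i _; rewrite mxE expr2. Qed.

Lemma enorm0 k : enorm (0 : 'cV[R]_k) = 0.
Proof. by rewrite /enorm big1 ?sqrtr0 // => i _; rewrite mxE expr0n. Qed.

Lemma enorm_eq0 k (v : 'cV[R]_k) : (enorm v == 0) = (v == 0).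
Proof.
apply/eqP/eqP => [|->]; last exact: enorm0.
move=> /(congr1 (fun r => r ^+ 2)); rewrite enorm_sqr expr0n /= => /eqP.
rewrite psumr_eq0 => [/allP v0|i _]; last exact: sqr_ge0.
apply/matrixP => i j; rewrite ord1 mxE; apply/eqP.
by rewrite -sqrf_eq0; apply: v0; rewrite mem_index_enum.
Qed.

Lemma enorm_gt0 k (v : 'cV[R]_k) : (0 < enorm v) = (v != 0).
Proof. by rewrite lt_def enorm_ge0 enorm_eq0 andbT. Qed.

Lemma enormZ k (a : R) (v : 'cV[R]_k) : enorm (a *: v) = `|a| * enorm v.
Proof.
rewrite /enorm -sqrtr_sqr -sqrtrM ?sqr_ge0 // mulr_sumr.
by congr Num.sqrt; apply: eq_bigr => i _; rewrite mxE exprMn.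
Qed.

Lemma dot_sqr_le k (u v : 'cV[R]_k) :
  ((u^T *m v) 0 0) ^+ 2 <= enorm u ^+ 2 * enorm v ^+ 2.
Proof.
have := @psd_form_cauchy_schwarz k 1%:M u v (trmx1 _ _).
by rewrite !mulmx1 !enorm_sqrE; apply => w; rewrite mulmx1 -enorm_sqrE sqr_ge0.
Qed.

Lemma dot_le k (u v : 'cV[R]_k) : (u^T *m v) 0 0 <= enorm u * enorm v.
Proof. by apply: le_of_sqr_le; rewrite ?mulr_ge0 ?enorm_ge0 // exprMn dot_sqr_le. Qed.

Lemma enorm_sqrD k (u v : 'cV[R]_k) :
  enorm (u + v) ^+ 2 = enorm u ^+ 2 + 2 * (u^T *m v) 0 0 + enorm v ^+ 2.
Proof.
have symE : (v^T *m u) 0 0 = (u^T *m v) 0 0.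
  by rewrite -mx11_trmx trmx_mul trmxK.
rewrite !enorm_sqrE (raddfD (@trmx R k 1)) /= mulmxDl !mulmxDr.
move: symE; set a := u^T *m u; set b := u^T *m v; set b' := v^T *m u.
by set c := v^T *m v; rewrite !mxE => ->; ring.
Qed.

Lemma enormD k (u v : 'cV[R]_k) : enorm (u + v) <= enorm u + enorm v.
Proof.
apply: le_of_sqr_le; first by rewrite addr_ge0 ?enorm_ge0.
by rewrite enorm_sqrD sqrrD mulr2n; have := dot_le u v; lra.
Qed.

Lemma enorm_isometry m k (Q : 'M[R]_(m, k)) (v : 'cV[R]_k) :
  Q^T *m Q = 1%:M -> enorm (Q *m v) = enorm v.
Proof.
move=> hQ; apply/eqP; rewrite -(eqrXn2 (ltn0Sn 1)) ?enorm_ge0 //.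
by rewrite !enorm_sqrE trmx_mul -mulmxA (mulmxA Q^T) hQ mul1mx.
Qed.

Section OrthogonalProjection.
Variables (m k : nat) (Q : 'M[R]_(m, k)).
Hypothesis hQ : Q^T *m Q = 1%:M.

Lemma enorm_proj_pythagoras (x : 'cV[R]_m) :
  enorm x ^+ 2 = enorm (Q *m Q^T *m x) ^+ 2 + enorm (x - Q *m Q^T *m x) ^+ 2.
Proof.
rewrite -[in LHS](subrK (Q *m Q^T *m x) x) [in LHS]addrC (enorm_sqrD (Q *m Q^T *m x)).
suff -> : ((Q *m Q^T *m x)^T *m (x - Q *m Q^T *m x)) 0 0 = 0 by rewrite mulr0 addr0.
rewrite mulmxBr !trmx_mul trmxK -!mulmxA (mulmxA Q^T Q) hQ mul1mx subrr.
by rewrite mxE.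
Qed.

Lemma enorm_proj_le (x : 'cV[R]_m) : enorm (Q^T *m x) <= enorm x.
Proof.
apply: le_of_sqr_le; rewrite ?enorm_ge0 // (enorm_proj_pythagoras x).
by rewrite -mulmxA (enorm_isometry _ hQ) lerDl sqr_ge0.
Qed.

Lemma enorm_coproj_le (x : 'cV[R]_m) : enorm (x - Q *m Q^T *m x) <= enorm x.
Proof.
by apply: le_of_sqr_le; rewrite ?enorm_ge0 // (enorm_proj_pythagoras x) lerDr sqr_ge0.
Qed.

End OrthogonalProjection.
End EuclideanNorm.

Section SpectralNorm.
Variables (R : realType) (m k : nat).
Implicit Types (A : 'M[R]_(m, k)) (v : 'cV[R]_k).

Lemma enorm_mulmx_le_frobenius A v :
  enorm (A *m v) <= Num.sqrt (\sum_i \sum_j A i j ^+ 2) * enorm v.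
Proof.
have s0 : 0 <= \sum_i \sum_j A i j ^+ 2.
  by apply: sumr_ge0 => i _; apply: sumr_ge0 => j _; rewrite sqr_ge0.
apply: le_of_sqr_le; first by rewrite mulr_ge0 ?sqrtr_ge0 ?enorm_ge0.
rewrite exprMn (sqr_sqrtr s0) enorm_sqr mulr_suml; apply: ler_sum => i _.
have := dot_sqr_le (row i A)^T v; rewrite trmxK -row_mul mxE enorm_sqr.
by under eq_bigr do rewrite !mxE.
Qed.

Lemma specnorm_has_sup A :
  has_sup [set enorm (A *m v) | v in [set v : 'cV[R]_k | enorm v <= 1]]%classic.
Proof.
split; first by exists 0, 0; rewrite /= ?enorm0 ?ler01 // mulmx0 enorm0.
exists (Num.sqrt (\sum_i \sum_j A i j ^+ 2)) => _ [v /= v1 <-].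
apply: le_trans (enorm_mulmx_le_frobenius A v) _.
by rewrite ler_piMr ?sqrtr_ge0.
Qed.

Lemma specnorm_ge0 A : 0 <= specnorm A.
Proof.
apply: (sup_upper_bound (specnorm_has_sup A)).
by exists 0; rewrite /= ?enorm0 ?ler01 // mulmx0 enorm0.
Qed.

Lemma enorm_mulmx_le A v : enorm (A *m v) <= specnorm A * enorm v.
Proof.
have [->|v0] := eqVneq v 0; first by rewrite mulmx0 !enorm0 mulr0.
have vpos : 0 < enorm v by rewrite enorm_gt0.
have : enorm (A *m ((enorm v)^-1 *: v)) <= specnorm A.
  apply: (sup_upper_bound (specnorm_has_sup A)); exists ((enorm v)^-1 *: v) => //=.
  by rewrite enormZ ger0_norm ?invr_ge0 ?enorm_ge0 // mulVf ?gt_eqF.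
rewrite -scalemxAr enormZ ger0_norm ?invr_ge0 ?enorm_ge0 //.
by rewrite mulrC -ler_pdivlMr ?invr_gt0 // invrK.
Qed.

Lemma specnorm_le A (c : R) : 0 <= c ->
  (forall v, enorm (A *m v) <= c * enorm v) -> specnorm A <= c.
Proof.
move=> c0 hc; apply: ge_sup; first by exists 0, 0; rewrite /= ?enorm0 ?ler01 // mulmx0 enorm0.
by move=> _ [v /= v1 <-]; apply: le_trans (hc v) _; rewrite ler_piMr.
Qed.

Lemma specnorm_sqr_le A (a : R) : 0 <= a ->
  (forall v, enorm (A *m v) ^+ 2 <= a * enorm v ^+ 2) -> specnorm A ^+ 2 <= a.
Proof.
move=> a0 ha; rewrite -[a]sqr_sqrtr // ler_sqr ?nnegrE ?specnorm_ge0 ?sqrtr_ge0 //.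
apply: specnorm_le => [|v]; first exact: sqrtr_ge0.
apply: le_of_sqr_le; first by rewrite mulr_ge0 ?sqrtr_ge0 ?enorm_ge0.
by rewrite exprMn (sqr_sqrtr a0) ha.
Qed.

End SpectralNorm.

Lemma specnorm_orthonormal_trmx_mulmx_le (R : realType) m k p (Q : 'M[R]_(m, k))
  (A : 'M[R]_(m, p)) : Q^T *m Q = 1%:M -> specnorm (Q^T *m A) <= specnorm A.
Proof.
move=> hQ; apply: specnorm_le => [|v]; first exact: specnorm_ge0.
by rewrite -mulmxA; apply: le_trans (enorm_proj_le hQ _) (enorm_mulmx_le _ _).
Qed.

Section LargestSingularValue.
Variable R : realType.

Lemma eigenvalue_le_specnorm_sqr m k (A : 'M[R]_(m, k)) l :
  eigenvalue (A^T *m A) l -> l <= specnorm A ^+ 2.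
Proof.
case/eigenvalueP => v hv v0.
have vpos : 0 < enorm v^T ^+ 2 by rewrite exprn_gt0 // enorm_gt0 trmx_eq0.
rewrite -(ler_pM2r vpos) -exprMn.
have -> : l * enorm v^T ^+ 2 = enorm (A *m v^T) ^+ 2.
  rewrite [RHS]enorm_sqrE trmx_mul trmxK !mulmxA -(mulmxA v) hv -scalemxAl mxE.
  by rewrite enorm_sqrE trmxK.
by rewrite ler_sqr ?nnegrE ?mulr_ge0 ?specnorm_ge0 ?enorm_ge0 ?enorm_mulmx_le.
Qed.

Lemma psd_unitmx_coercive k (C : 'M[R]_k) : C^T = C ->
  (forall v : 'cV[R]_k, 0 <= (v^T *m C *m v) 0 0) -> C \in unitmx ->
  exists2 e : R, 0 < e & forall v, e * enorm v ^+ 2 <= (v^T *m C *m v) 0 0.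
Proof.
move=> symC psdC unitC; set a := specnorm C; set b := specnorm (invmx C).
have a0 : 0 <= a := specnorm_ge0 C.
have b0 : 0 <= b := specnorm_ge0 (invmx C).
exists (1 + a * b ^+ 2)^-1 => [|v]; first by rewrite invr_gt0 ltr_wpDr ?mulr_ge0 ?sqr_ge0.
rewrite mulrC ler_pdivrMr ?ltr_wpDr ?mulr_ge0 ?sqr_ge0 //.
set q := (v^T *m C *m v) 0 0; have q0 : 0 <= q := psdC v.
set w := C *m v.
(* Cauchy-Schwarz for the form of [C] at [w = C v] and [v]: [|w|^4 <= (w^T C w) q]. *)
have hw : enorm w ^+ 2 <= a * q.
  have := psd_form_cauchy_schwarz w v symC psdC.
  rewrite -mulmxA -/w -enorm_sqrE -/q => cs.
  have [w0|wpos] := eqVneq (enorm w) 0; first by rewrite w0 expr0n mulr_ge0.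
  have wpos2 : 0 < enorm w ^+ 2 by rewrite exprn_gt0 // lt_def wpos enorm_ge0.
  rewrite -(ler_pM2l wpos2); apply: le_trans cs _.
  rewrite mulrA ler_wpM2r // -mulmxA; apply: le_trans (dot_le _ _) _.
  by rewrite expr2 -mulrA ler_wpM2l ?enorm_ge0 // mulrC enorm_mulmx_le.
have hv : enorm v <= b * enorm w by rewrite -[v in enorm v](mulKmx unitC v) enorm_mulmx_le.
have hv2 : enorm v ^+ 2 <= b ^+ 2 * (a * q).
  apply: le_trans (ler_wpM2l (sqr_ge0 b) hw); rewrite -exprMn.
  by rewrite ler_sqr ?nnegrE ?enorm_ge0 ?mulr_ge0 ?enorm_ge0.
apply: le_trans hv2 _; rewrite (_ : _ * (a * q) = q * (a * b ^+ 2)); last by ring.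
by rewrite mulrDr mulr1; lra.
Qed.

Lemma eigenvalue_specnorm_sqr m k (A : 'M[R]_(m, k.+1)) :
  eigenvalue (A^T *m A) (specnorm A ^+ 2).
Proof.
set c := specnorm A ^+ 2; set C := c%:M - A^T *m A.
have formE v : (v^T *m C *m v) 0 0 = c * enorm v ^+ 2 - enorm (A *m v) ^+ 2.
  rewrite mulmxBr mulmxBl mul_mx_scalar -scalemxAl mxE mxE -enorm_sqrE mxE.
  by rewrite (enorm_sqrE (A *m v)) trmx_mul !mulmxA.
have symC : C^T = C by rewrite linearB /= tr_scalar_mx trmx_mul trmxK.
have psdC (v : 'cV[R]_k.+1) : 0 <= (v^T *m C *m v) 0 0.
  rewrite formE subr_ge0 /c -exprMn ler_sqr ?nnegrE ?mulr_ge0 ?specnorm_ge0 ?enorm_ge0 //.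
  exact: enorm_mulmx_le.
(* Otherwise [C] is positive definite, which bounds [|A v|^2] by [(c - e) |v|^2]. *)
apply: contraT => not_eig.
have unitC : C \in unitmx.
  rewrite unitmxE unitfE; apply: contra not_eig => /det0P [u u0 /eqP].
  rewrite mulmxBr mul_mx_scalar subr_eq0 => /eqP uC.
  by apply/eigenvalueP; exists u.
have [e e0 coerC] := psd_unitmx_coercive symC psdC unitC.
have [u u0] : exists u : 'cV[R]_k.+1, u != 0.
  by exists (const_mx 1); apply/eqP => /matrixP /(_ 0 0) /eqP; rewrite !mxE oner_eq0.
have upos : 0 < enorm u ^+ 2 by rewrite exprn_gt0 // enorm_gt0.
have ce0 : 0 <= c - e.
  have : e * enorm u ^+ 2 <= c * enorm u ^+ 2.
    by apply: le_trans (coerC u) _; rewrite formE lerBlDr lerDl sqr_ge0.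
  by rewrite ler_pM2r // subr_ge0.
have : c <= c - e.
  by apply: specnorm_sqr_le ce0 _ => v; have := coerC v; rewrite formE mulrBl; lra.
lra.
Qed.

Lemma sigma1_specnorm m k (A : 'M[R]_(m, k)) : (0 < k)%N -> sigma1 A = specnorm A.
Proof.
case: k A => // k A _; rewrite /sigma1.
have -> : sup [set l | eigenvalue (A^T *m A) l]%classic = specnorm A ^+ 2.
  apply/le_anti/andP; split.
    apply: ge_sup; first by exists (specnorm A ^+ 2); exact: eigenvalue_specnorm_sqr.
    by move=> l; exact: eigenvalue_le_specnorm_sqr.
  apply: sup_upper_bound; last exact: eigenvalue_specnorm_sqr.
  split; first by exists (specnorm A ^+ 2); exact: eigenvalue_specnorm_sqr.
  by exists (specnorm A ^+ 2) => l; exact: eigenvalue_le_specnorm_sqr.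
by rewrite sqrtr_sqr ger0_norm ?specnorm_ge0.
Qed.

End LargestSingularValue.

Section Pseudoinverse.
Variable R : realType.

Lemma penrose_uniq m k (M : 'M[R]_(m, k)) P Q :
  penrose M P -> penrose M Q -> P = Q.
Proof.
move=> [p1 p2 p3 p4] [q1 q2 q3 q4].
have eMt : M^T = M^T *m (M *m Q) by rewrite -{1}q1 trmx_mul q3.
have ePt : P = P *m P^T *m M^T.
  have e : P = P *m (M *m P)^T by rewrite p3 mulmxA p2.
  by rewrite {1}e trmx_mul mulmxA.
have eP : P = P *m M *m Q by rewrite {1}ePt eMt !mulmxA -ePt.
have eQt : Q = M^T *m Q^T *m Q.
  have e : Q = (Q *m M)^T *m Q by rewrite q4 q2.
  by rewrite {1}e trmx_mul.
have eMt2 : M^T = P *m M *m M^T by rewrite -{1}p1 -mulmxA trmx_mul p4.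
have eMQ : M^T *m Q^T = Q *m M by rewrite -trmx_mul q4.
have eQ : Q = P *m M *m Q.
  by rewrite {1}eQt {1}eMt2 -(mulmxA (P *m M)) eMQ -!mulmxA (mulmxA Q M Q) q2.
by rewrite eP [RHS]eQ.
Qed.

Lemma pinv_eq m k (M : 'M[R]_(m, k)) P : penrose M P -> Defs.pinv M = P.
Proof. by move=> hP; apply: (penrose_uniq _ hP); apply: getPex; exists P. Qed.

Lemma pinv_trmx_orthonormal m k (Q : 'M[R]_(m, k)) :
  Q^T *m Q = 1%:M -> Defs.pinv Q^T = Q.
Proof.
move=> hQ; apply: pinv_eq; split.
- by rewrite hQ mul1mx.
- by rewrite -mulmxA hQ mulmx1.
- by rewrite hQ trmx1.
- by rewrite trmx_mul trmxK.
Qed.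

End Pseudoinverse.

Section Truncation.
Variables (R : realType) (n N : nat) (h : (n <= N)%N) (V : 'M[R]_N).

Lemma firstcolsE : firstcols h V = V *m pid_mx n.
Proof.
have -> : pid_mx n = colsub (widen_ord h) 1%:M :> 'M[R]_(N, n).
  by apply/matrixP => i j; rewrite !mxE -val_eqE /=; case: eqP => //= ->; rewrite ltn_ord.
by rewrite mulmx_colsub mulmx1; apply/matrixP => i j; rewrite !mxE.
Qed.

Hypothesis hV : V^T *m V = 1%:M.

Lemma firstcols_orthonormal : (firstcols h V)^T *m firstcols h V = 1%:M.
Proof.
rewrite firstcolsE trmx_mul tr_pid_mx mulmxA -(mulmxA _ V^T) hV mulmx1.
by rewrite mul_pid_mx minnn (minn_idPr h) pid_mx_1.
Qed.

Lemma firstcols_coproj (x : 'cV[R]_N) :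
  V^T *m (x - firstcols h V *m (firstcols h V)^T *m x) = copid_mx n *m (V^T *m x).
Proof.
rewrite firstcolsE trmx_mul tr_pid_mx -!mulmxA (mulmxA (pid_mx n)) pid_mx_id //.
by rewrite mulmxBr !mulmxA hV mul1mx /copid_mx !mulmxBl mul1mx.
Qed.

End Truncation.

Section SingularValues.
Variable R : realType.

Lemma diag_mx_copid k n (d : 'rV[R]_k) :
  diag_mx d *m copid_mx n = diag_mx (\row_i (d 0 i *+ (n <= i)%N)).
Proof.
apply/matrixP => i j; rewrite mul_diag_mx !mxE.
have [->|ij] := eqVneq i j.
  by rewrite eqxx mulr1n; case: leqP => _; rewrite ?subr0 ?subrr ?mulr1 ?mulr0.
by rewrite val_eqE (negbTE ij) /= subrr mulr0.
Qed.

Lemma enorm_diag_mx_le k (d : 'rV[R]_k) (c : R) (v : 'cV[R]_k) : 0 <= c ->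
  (forall i, `|d 0 i| <= c) -> enorm (diag_mx d *m v) <= c * enorm v.
Proof.
move=> c0 hd; apply: le_of_sqr_le; first by rewrite mulr_ge0 ?enorm_ge0.
rewrite exprMn !enorm_sqr mulr_sumr; apply: ler_sum => i _.
rewrite mul_diag_mx mxE exprMn ler_wpM2r ?sqr_ge0 //.
by rewrite -real_normK ?num_real // ler_sqr ?nnegrE.
Qed.

Lemma svd_coproj_le N n (hnN : (n < N)%N) (W U V : 'M[R]_N) (s : 'I_N -> R)
  (x : 'cV[R]_N) : is_svd W U V s ->
  enorm (W *m (x - firstcols (ltnW hnN) V *m (firstcols (ltnW hnN) V)^T *m x))
    <= s (Ordinal hnN) * enorm x.
Proof.
case=> hU hV -> s_ge0 s_decr.
have hVt : V^T^T *m V^T = 1%:M by rewrite trmxK; exact: mulmx1C.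
rewrite -2!mulmxA enorm_isometry // firstcols_coproj // mulmxA diag_mx_copid.
rewrite -[enorm x](enorm_isometry x hVt); apply: enorm_diag_mx_le => // i.
rewrite !mxE; case: leqP => [ni|_]; last by rewrite mulr0n normr0.
by rewrite mulr1n ger0_norm //; exact: s_decr.
Qed.

End SingularValues.

Section MeanValue.
Local Open Scope classical_set_scope.
Variable R : realType.

Lemma linear_colE k m (f : 'cV[R]_k -> 'cV[R]_m) (v : 'cV[R]_k) :
  linear f -> f v = \matrix_(i, j) f (delta_mx j 0) i 0 *m v.
Proof.
move=> /GRing.semilinear_linear [fZ fD].
have f0 : f 0 = 0 by apply: (addrI (f 0)); rewrite -fD !addr0.
apply/matrixP => i j; rewrite ord1 {1}[v]matrix_sum_delta (big_morph f fD f0).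
rewrite summxE !mxE; apply: eq_bigr => l _.
by rewrite big_ord1 fZ !mxE mulrC.
Qed.

Section Segment.
Variables (V W : normedModType R) (F : V -> W) (p q : V) (t : R).

Let segment_quotientE :
  (fun h : R => h^-1 *: (((fun s : R => F (p + s *: q)) \o shift t) (h *: 1)
                        - F (p + t *: q))) =
  (fun h : R => h^-1 *: ((F \o shift (p + t *: q)) (h *: q) - F (p + t *: q))).
Proof.
by apply: funext => h /=; rewrite scalerDl -scalerA scale1r addrCA.
Qed.

Lemma derive_segment : 'D_1 (fun s : R => F (p + s *: q)) t = 'D_q F (p + t *: q).
Proof. by rewrite /derive segment_quotientE. Qed.

Lemma derivable_segment :
  derivable (fun s : R => F (p + s *: q)) t 1 = derivable F (p + t *: q) q.
Proof. by rewrite /derivable segment_quotientE. Qed.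

End Segment.

Lemma mean_value_enorm m k (M : 'M[R]_(m, k)) (f : R -> 'cV[R]_k) :
  (forall t, derivable f t 1) ->
  exists2 c : R, 0 < c < 1 & enorm (M *m (f 1 - f 0)) <= enorm (M *m 'D_1 f c).
Proof.
move=> fd; set u := M *m (f 1 - f 0); set a := u^T *m M.
pose psi := \sum_(j < k) a 0 j \*: (fun t : R => f t j 0).
have psiE t : psi t = (a *m f t) 0 0.
  by rewrite /psi fct_sumE mxE; apply: eq_bigr.
have fjd t j : derivable (fun s => f s j 0) t 1 by move/derivable_mxP: (fd t); apply.
have psid t : derivable psi t 1.
  by apply: derivable_sum => j; apply: derivableZ.
have psiD t : 'D_1 psi t = (a *m 'D_1 f t) 0 0.
  rewrite derive_sum => [|j]; last exact: derivableZ.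
  by rewrite mxE; apply: eq_bigr => j _; rewrite deriveZ // (derive_mx (fd t)) !mxE.
have psi_cont : {within `[0, 1], continuous psi}.
  apply: continuous_subspaceT => t; apply: differentiable_continuous.
  exact/derivable1_diffP.
have [c c01 hc] := MVT ltr01 (fun t _ => derivableP (psid t)) psi_cont.
exists c; first by move: c01; rewrite in_itv.
(* [|u|^2 = psi 1 - psi 0 = psi'(c) = u^T (M f'(c)) <= |u| |M f'(c)|]. *)
have hu : enorm u ^+ 2 <= enorm u * enorm (M *m 'D_1 f c).
  have -> : enorm u ^+ 2 = psi 1 - psi 0.
    by rewrite enorm_sqrE {2}/u mulmxA -/a mulmxBr mxE [X in _ + X]mxE !psiE.
  by rewrite hc psiD subr0 mulr1 /a -mulmxA; apply: dot_le.
have [u0|upos] := eqVneq (enorm u) 0; first by rewrite u0; apply: enorm_ge0.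
by rewrite expr2 ler_pM2l ?lt_def ?upos ?enorm_ge0 in hu.
Qed.

End MeanValue.

Section PairedArguments.
Variables (R : realType) (N : nat) (g : 'cV[R]_N -> 'cV[R]_N -> 'cV[R]_N).
Let G (q : 'cV[R]_N * 'cV[R]_N) := g q.1 q.2.

Lemma derive_pair_l (x y v : 'cV[R]_N) :
  'D_(v, 0) G (x, y) = 'D_v (fun z => g z y) x.
Proof.
rewrite /derive; suff -> : (fun h : R => h^-1 *: ((G \o shift (x, y)) (h *: (v, 0)) - G (x, y)))
  = (fun h : R => h^-1 *: (((fun z => g z y) \o shift x) (h *: v) - g x y)) by [].
by apply: funext => h; rewrite /G /= scaler0 add0r.
Qed.

Lemma derive_pair_r (x y w : 'cV[R]_N) :
  'D_(0, w) G (x, y) = 'D_w (fun z => g x z) y.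
Proof.
rewrite /derive; suff -> : (fun h : R => h^-1 *: ((G \o shift (x, y)) (h *: (0, w)) - G (x, y)))
  = (fun h : R => h^-1 *: (((fun z => g x z) \o shift y) (h *: w) - g x y)) by [].
by apply: funext => h; rewrite /G /= scaler0 add0r.
Qed.

Lemma diff_pairE (x y v w : 'cV[R]_N) : differentiable G (x, y) ->
  'd G (x, y) (v, w) = Jx g x y *m v + Jy g x y *m w.
Proof.
move=> dG; have -> : (v, w) = (v, 0) + (0, w) by congr pair; rewrite ?addr0 ?add0r.
rewrite linearD /=; congr (_ + _).
  rewrite (@linear_colE _ _ _ (fun a => 'd G (x, y) (a, 0))) => [|k a b /=].
    by congr (_ *m _); apply/matrixP => i j; rewrite !mxE -deriveE // derive_pair_l.
  by rewrite -linearP; congr ('d G (x, y) _); congr (_, _); rewrite addr0; apply/esym/scaler0.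
rewrite (@linear_colE _ _ _ (fun a => 'd G (x, y) (0, a))) => [|k a b /=].
  by congr (_ *m _); apply/matrixP => i j; rewrite !mxE -deriveE // derive_pair_r.
by rewrite -linearP; congr ('d G (x, y) _); congr (_, _); rewrite addr0; apply/esym/scaler0.
Qed.

Lemma mean_value_pair m (M : 'M[R]_(m, N)) (W : 'M[R]_N) (z d : 'cV[R]_N) :
  (forall q, differentiable G q) ->
  exists2 c : R, 0 < c < 1 &
    enorm (M *m (g (z + d) (W *m (z + d)) - g z (W *m z))) <=
    enorm (M *m (Jx g (z + c *: d) (W *m (z + c *: d)) *m d
                 + Jy g (z + c *: d) (W *m (z + c *: d)) *m (W *m d))).
Proof.
move=> dG; pose f (t : R) := G ((z, W *m z) + t *: (d, W *m d)).
have pathE t : (z, W *m z) + t *: (d, W *m d) = (z + t *: d, W *m (z + t *: d)).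
  by congr (_, _); rewrite mulmxDr -scalemxAr.
have [c c01 hc] : exists2 c : R, 0 < c < 1 &
    enorm (M *m (f 1 - f 0)) <= enorm (M *m 'D_1 f c).
  by apply: mean_value_enorm => t; rewrite derivable_segment; exact: diff_derivable.
exists c => //; move: hc; rewrite /f derive_segment deriveE // (pathE c) diff_pairE //.
by rewrite (pathE 1) (pathE 0) scale1r scale0r addr0.
Qed.

End PairedArguments.

Theorem theoremS59 (R : realType) (N n : nat) (hn1 : (1 <= n)%N) (hnN : (n < N)%N)
  (W U V : 'M[R]_N) (s : 'I_N -> R) (hsvd : is_svd W U V s)
  (g : 'cV[R]_N -> 'cV[R]_N -> 'cV[R]_N) (hg : C1 g) (x : 'cV[R]_N) :
  let Vn := firstcols (ltnW hnN) V in
  let M := Vn^T in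
  let sn1 := s (Ordinal hnN) in
  exists x' : 'cV[R]_N,
    (exists t : R, 0 <= t <= 1 /\ x' = (1 - t) *: x + t *: (Vn *m Vn^T *m x)) /\
    let y' := W *m x' in
    align_err g W M x <=
      (Num.sqrt n%:R)^-1 *
        (enorm (Vn^T *m Jx g x' y' *m (1%:M - Vn *m Vn^T) *m x)
         + sn1 * specnorm (Vn^T *m Jy g x' y') * enorm x) /\
    (x != 0 ->
      align_err g W M x / enorm x <=
        (Num.sqrt n%:R)^-1 * (sigma1 (Jx g x' y') + sn1 * sigma1 (Jy g x' y'))).
Proof.
move=> Vn M sn1; have [_ hV _ s_ge0 _] := hsvd.
have VnO : Vn^T *m Vn = 1%:M := firstcols_orthonormal (ltnW hnN) hV.
set z := Vn *m Vn^T *m x; set d := x - z.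
have dG : forall q, differentiable (fun q => g q.1 q.2) q by case: hg.
have [c /andP[c0 c1]] := mean_value_pair M W z d dG.
rewrite (_ : z + d = x); last by rewrite addrC subrK.
set x' := z + c *: d => hmean.
exists x'; split.
  exists (1 - c); split; first by apply/andP; split; lra.
  by rewrite /x' /d; apply/matrixP => i j; rewrite !mxE; ring.
move=> y'; rewrite -/y' in hmean.
set A := Jx g x' y' in hmean *; set B := Jy g x' y' in hmean *.
have hpinv : Defs.pinv M *m M *m x = z by rewrite pinv_trmx_orthonormal.
have hWd : enorm (W *m d) <= sn1 * enorm x := svd_coproj_le hnN x hsvd.
have hA : Vn^T *m A *m (1%:M - Vn *m Vn^T) *m x = M *m A *m d.
  by rewrite -!mulmxA mulmxBl mul1mx.
have bound : enorm (M *m (g x (W *m x) - g z (W *m z))) <=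
    enorm (M *m A *m d) + sn1 * specnorm (M *m B) * enorm x.
  apply: le_trans hmean _; rewrite mulmxDr (mulmxA M A) (mulmxA M B); apply: le_trans (enormD _ _) _.
  rewrite lerD2l [sn1 * _]mulrC -mulrA; apply: le_trans (enorm_mulmx_le _ _) _.
  by apply: ler_wpM2l => //; exact: specnorm_ge0.
have isqrt_ge0 : 0 <= (Num.sqrt n%:R)^-1 :> R by rewrite invr_ge0 sqrtr_ge0.
rewrite /align_err hpinv -mulmxBr; split=> [|x0]; first by rewrite hA; apply: ler_wpM2l.
have hN : (0 < N)%N := leq_ltn_trans (leq0n n) hnN.
rewrite !sigma1_specnorm // ler_pdivrMr ?enorm_gt0 // -mulrA; apply: ler_wpM2l => //.
rewrite mulrDl; apply: le_trans bound _; apply: lerD.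
  apply: le_trans (enorm_mulmx_le _ _) _; apply: ler_pM; rewrite ?specnorm_ge0 ?enorm_ge0 //.
    exact: specnorm_orthonormal_trmx_mulmx_le.
  exact: enorm_coproj_le.
apply: ler_wpM2r; first exact: enorm_ge0.
by apply: ler_wpM2l; [exact: s_ge0 | exact: specnorm_orthonormal_trmx_mulmx_le].
Qed.
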